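(* Let $(X,d)$ be a geodesic metric space and $\epsilon\ge 0$ such that for all $x,y\in X$, $s,t\ge 0$, the set $B(x,s)\cap B(y,t)$ has eccentricity at most $\epsilon$. Then for every $q\ge 0$, all $x,y\in X$, every $q$-path $\mu$ from $x$ to $y$ and every geodesic $\gamma$ from $x$ to $y$, each point of $\mu$ lies within distance $2q+2\epsilon$ of some point of $\gamma$.
   Context: $B(x,r)=\{z\in X: d(x,z)\le r\}$ denotes the closed ball. A set $S\subseteq X$ has eccentricity at most $\delta$ if $S=\emptyset$ or there exist $R\ge 0$ and $c,c'\in X$ with $B(c,R)\subseteq S\subseteq B(c',R+\delta)$. For $q\ge0$, a $q$-path from $x$ to $y$ is a continuous path $\mu$ from $x$ to $y$ such that every point $z$ on $\mu$ satisfies $d(x,z)+d(z,y)\le d(x,y)+q$. *)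

From Stdlib Require Import Reals.
Open Scope R_scope.

Definition is_metric {X : Type} (d : X -> X -> R) : Prop :=
  (forall x y, 0 <= d x y) /\
  (forall x y, d x y = 0 <-> x = y) /\
  (forall x y, d x y = d y x) /\
  (forall x y z, d x z <= d x y + d y z).

Definition cball {X : Type} (d : X -> X -> R) (x : X) (r : R) : X -> Prop :=
  fun z => d x z <= r.

Definition ecc_le {X : Type} (d : X -> X -> R) (S : X -> Prop) (delta : R) : Prop :=
  (forall z, ~ S z) \/
  exists (Rad : R) (c c' : X), 0 <= Rad /\
    (forall z, cball d c Rad z -> S z) /\
    (forall z, S z -> cball d c' (Rad + delta) z).

Definition cont_on {X : Type} (d : X -> X -> R) (f : R -> X) (a b : R) : Prop :=
  forall t, a <= t <= b -> forall e, 0 < e -> exists del, 0 < del /\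
    forall s, a <= s <= b -> Rabs (s - t) < del -> d (f s) (f t) < e.

Definition is_geodesic {X : Type} (d : X -> X -> R) (x y : X) (g : R -> X) : Prop :=
  g 0 = x /\ g (d x y) = y /\
  forall s t, 0 <= s <= d x y -> 0 <= t <= d x y -> d (g s) (g t) = Rabs (s - t).

Definition geodesic_space {X : Type} (d : X -> X -> R) : Prop :=
  forall x y : X, exists g, is_geodesic d x y g.

Definition is_qpath {X : Type} (d : X -> X -> R) (q : R) (x y : X) (mu : R -> X) : Prop :=
  mu 0 = x /\ mu 1 = y /\ cont_on d mu 0 1 /\
  forall t, 0 <= t <= 1 -> d x (mu t) + d (mu t) y <= d x y + q.

(* Let z lie on a q-path from x to y, with a = d(x,z), and let w be the point of the
   geodesic at distance a from x.  Both z and w lie in S = B(x,a) ∩ B(y, d(x,y) + q - a).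
   Any ball B(c,R) inside S has R <= q: walking from c towards x for length R stays in S,
   and the triangle inequality through that point forces d(x,y) <= d(x,y) + q - R.
   Since S sits in a ball of radius R + eps, we get d(z,w) <= 2q + 2eps.  The cases
   a <= q and a >= d(x,y) are handled by the endpoints of the geodesic.  Only the
   excess inequality of the q-path is used, not its continuity. *)
From Stdlib Require Import Reals Lra.
Open Scope R_scope.

Section MetricSpace.

Variables (X : Type) (d : X -> X -> R).
Hypothesis Hmet : is_metric d.

Lemma dist_ge0 x y : 0 <= d x y.
Proof. apply Hmet. Qed.

Lemma dist_xx x : d x x = 0.
Proof. apply Hmet; reflexivity. Qed.

Lemma dist_sym x y : d x y = d y x.
Proof. apply Hmet. Qed.

Lemma dist_triangle x y z : d x z <= d x y + d y z.
Proof. apply Hmet. Qed.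

Lemma geodesic_dist_from_start x y g s :
  is_geodesic d x y g -> 0 <= s <= d x y -> d x (g s) = s.
Proof.
  intros [g0 [_ giso]] Hs.
  rewrite <- g0 at 1. rewrite giso by lra. rewrite Rabs_left1; lra.
Qed.

Lemma geodesic_dist_to_end x y g s :
  is_geodesic d x y g -> 0 <= s <= d x y -> d (g s) y = d x y - s.
Proof.
  intros [_ [g1 giso]] Hs.
  rewrite <- g1 at 1. rewrite giso by lra. rewrite Rabs_left1; lra.
Qed.

Lemma ecc_le_dist (S : X -> Prop) (delta r : R) u v :
  ecc_le d S delta -> S u -> S v ->
  (forall c Rad, 0 <= Rad -> (forall z, cball d c Rad z -> S z) -> Rad <= r) ->
  d u v <= 2 * (r + delta).
Proof.
  intros [Hempty | [Rad [c [c' [HRad [Hin Hout]]]]]] Hu Hv Hr.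
  - exfalso; exact (Hempty u Hu).
  - pose proof (Hr c Rad HRad Hin).
    pose proof (Hout u Hu) as Hcu; pose proof (Hout v Hv) as Hcv.
    unfold cball in Hcu, Hcv.
    pose proof (dist_triangle u c' v). rewrite (dist_sym u c') in *. lra.
Qed.

Hypothesis Hgeo : geodesic_space d.

Lemma lens_inradius_le (x y c : X) (a b q Rad : R) :
  a + b <= d x y + q -> b < d x y -> 0 <= Rad ->
  (forall z, cball d c Rad z -> cball d x a z /\ cball d y b z) ->
  Rad <= q.
Proof.
  unfold cball. intros Hab Hb HRad Hin.
  assert (Hxc : d x c <= a).
  { apply (Hin c). rewrite dist_xx. lra. }
  destruct (Rlt_le_dec (d x c) Rad) as [Hlt | Hle].
  - exfalso.
    assert (Hyx : d y x <= b) by (apply (Hin x); rewrite dist_sym; lra).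
    rewrite dist_sym in Hyx. lra.
  - destruct (Hgeo c x) as [g Hg].
    assert (Hcx : 0 <= Rad <= d c x) by (rewrite dist_sym; lra).
    pose proof (geodesic_dist_from_start c x g Rad Hg Hcx) as Hcp.
    pose proof (geodesic_dist_to_end c x g Rad Hg Hcx) as Hpx.
    assert (Hyp : d y (g Rad) <= b) by (apply (Hin (g Rad)); lra).
    pose proof (dist_triangle x (g Rad) y).
    rewrite (dist_sym x (g Rad)), (dist_sym (g Rad) y), (dist_sym c x) in *.
    lra.
Qed.

Variable eps : R.
Hypothesis Heps : 0 <= eps.
Hypothesis Hecc : forall (u v : X) (s t : R), 0 <= s -> 0 <= t ->
  ecc_le d (fun w => cball d u s w /\ cball d v t w) eps.

Lemma near_geodesic_of_excess (q : R) (x y z : X) (gam : R -> X) :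
  0 <= q -> d x z + d z y <= d x y + q -> is_geodesic d x y gam ->
  exists s, 0 <= s <= d x y /\ d z (gam s) <= 2 * q + 2 * eps.
Proof.
  intros Hq Hz Hgam.
  pose proof (dist_ge0 x y).
  set (a := d x z) in *.
  assert (Ha : 0 <= a) by apply dist_ge0.
  destruct (Rle_lt_dec a q) as [Haq | Hqa].
  { exists 0. split; [lra |].
    destruct Hgam as [-> _]. rewrite dist_sym. fold a. lra. }
  destruct (Rle_lt_dec (d x y) a) as [Hya | Hay].
  { exists (d x y). split; [lra |].
    destruct Hgam as [_ [-> _]]. lra. }
  exists a. split; [lra |].
  assert (Hb : 0 <= d x y + q - a) by lra.
  assert (Hs : 0 <= a <= d x y) by lra.
  pose proof (geodesic_dist_from_start x y gam a Hgam Hs) as Hxw.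
  pose proof (geodesic_dist_to_end x y gam a Hgam Hs) as Hwy.
  enough (d z (gam a) <= 2 * (q + eps)) by lra.
  apply (ecc_le_dist _ eps q z (gam a) (Hecc x y a _ Ha Hb)); unfold cball.
  - rewrite (dist_sym y z). fold a. split; lra.
  - rewrite (dist_sym y (gam a)). split; lra.
  - intros c Rad HRad Hin.
    exact (lens_inradius_le x y c a (d x y + q - a) q Rad ltac:(lra) ltac:(lra) HRad Hin).
Qed.

End MetricSpace.

Theorem lemma3p3 (X : Type) (d : X -> X -> R) (eps : R)
  (Hmet : is_metric d) (Hgeo : geodesic_space d) (Heps : 0 <= eps)
  (Hecc : forall (x y : X) (s t : R), 0 <= s -> 0 <= t ->
     ecc_le d (fun z => cball d x s z /\ cball d y t z) eps) :
  forall (q : R), 0 <= q -> forall (x y : X) (mu gam : R -> X),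
    is_qpath d q x y mu -> is_geodesic d x y gam ->
    forall t, 0 <= t <= 1 ->
      exists s, 0 <= s <= d x y /\ d (mu t) (gam s) <= 2 * q + 2 * eps.
Proof.
  intros q Hq x y mu gam [_ [_ [_ Hexcess]]] Hgam t Ht.
  exact (near_geodesic_of_excess X d Hmet Hgeo eps Heps Hecc q x y (mu t) gam Hq (Hexcess t Ht) Hgam).
Qed.
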